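(* Let $\Gamma$ be the integer Heisenberg group, elements written $(a,b,c)$. Let $\{q_1,q_2,\dots\}$ be an infinite set of distinct primes, and for $\ell\ge1$ put $M_\ell=q_1q_2\cdots q_\ell$ and $N_\ell=q_1^2q_2^2\cdots q_\ell^2$, and $\Gamma_\ell=\{(aM_\ell,bN_\ell,cN_\ell):a,b,c\in\mathbb{Z}\}$. Then $\Gamma_\ell$ is a descending chain of finite-index subgroups, and the associated Cantor action $(X_\infty,\Gamma,\Phi)$, where $X_\infty=\varprojlim\Gamma/\Gamma_\ell$ with $\Gamma$ acting by left translation on each coset space, is topologically free and wild, and its prime spectrum is $\{q_1,q_2,\dots\}$ (each $q_i$ with finite multiplicity).
   Context: The integer Heisenberg group consists of the matrices $\begin{pmatrix}1&a&c\\0&1&b\\0&0&1\end{pmatrix}$, $a,b,c\in\mathbb{Z}$, denoted $(a,b,c)$, with product $(a,b,c)(a',b',c')=(a+a',b+b',c+c'+ab')$. For a descending chain of finite-index subgroups $\Gamma_\ell$, $X_\infty=\varprojlim\{\Gamma/\Gamma_{\ell+1}\to\Gamma/\Gamma_\ell\}$ is a Cantor space (Tychonoff topology) on which $\Gamma$ acts minimally and equicontinuously. The Steinitz order of this action is the supernatural number $\mathrm{lcm}\{[\Gamma:\Gamma_\ell]\}=\prod_p p^{\chi(p)}$, and its prime spectrum is $\{p:\chi(p)>0\}$. Topologically free: no nontrivial $\Phi(g)$ restricts to the identity on a nonempty open set. Locally quasi-analytic: there is $\varepsilon>0$ such that for every nonempty open $U$ of diameter $<\varepsilon$, nonempty open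 $V\subset U$ and group elements $g_1,g_2$, agreement of $g_1,g_2$ on $V$ implies agreement on $U$. With $\mathfrak{G}(\Phi)$ the closure of $\Phi(\Gamma)$ in $\mathrm{Homeo}(X_\infty)$ (uniform topology), the action is wild if the action of $\mathfrak{G}(\Phi)$ on $X_\infty$ is not locally quasi-analytic. *)

From HB Require Import structures.
From mathcomp Require Import all_boot all_order all_algebra.
From mathcomp Require Import all_classical all_reals.
From mathcomp Require Import Rstruct.
Set Implicit Arguments. Unset Strict Implicit. Unset Printing Implicit Defensive.
Import Order.TTheory GRing.Theory Num.Theory.
Local Open Scope classical_set_scope.
Local Open Scope ring_scope.

Definition Heis := (int * int * int)%type.

Definition hmul (x y : Heis) : Heis :=
  let '(a, b, c) := x in let '(a', b', c') := y in
  (a + a', b + b', c + c' + a * b').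
Definition hone : Heis := (0, 0, 0).
Definition hinv (x : Heis) : Heis :=
  let '(a, b, c) := x in (- a, - b, - c + a * b).

Definition is_subgroup (H : set Heis) : Prop :=
  H hone /\ (forall x y, H x -> H y -> H (hmul x y)) /\
  (forall x, H x -> H (hinv x)).

Definition same_lcoset (H : set Heis) (g h : Heis) : Prop := H (hmul (hinv g) h).

Definition has_index (H : set Heis) (n : nat) : Prop :=
  exists r : 'I_n -> Heis,
    (forall i j, same_lcoset H (r i) (r j) -> i = j) /\
    (forall h, exists i, same_lcoset H (r i) h).

Definition finite_index (H : set Heis) : Prop := exists n, has_index H n.

Definition lcoset (H : set Heis) (g : Heis) : set Heis := [set hmul g h | h in H].

(* q is indexed from 0: M_l = q_0 ... q_{l-1}, N_l = q_0^2 ... q_{l-1}^2 *)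
Definition Mq (q : nat -> nat) (l : nat) : int := (\prod_(i < l) q i)%N%:Z.
Definition Nq (q : nat -> nat) (l : nat) : int := (\prod_(i < l) (q i ^ 2))%N%:Z.

Definition Gamma (q : nat -> nat) (l : nat) : set Heis :=
  [set x | exists a b c : int, x = (a * Mq q l, b * Nq q l, c * Nq q l)].

(* A point is a compatible sequence of left cosets x_l in Gamma/Gamma_l. *)
Definition Pt := (nat -> set Heis)%type.

Definition Xinf (Gam : nat -> set Heis) : set Pt :=
  [set x | forall l, (exists g, x l = lcoset (Gam l) g) /\ x l.+1 `<=` x l].

Definition act (g : Heis) (x : Pt) : Pt := fun l => [set hmul g h | h in x l].

(* Tychonoff topology (discrete factors), restricted to X : basic open sets
   are the cylinders {y | y_l = x_l for l < n}. *)
Definition agree (n : nat) (x y : Pt) : Prop := forall l, (l < n)%N -> x l = y l.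

Definition is_open (X : set Pt) (U : set Pt) : Prop :=
  U `<=` X /\ forall x, U x -> exists n, forall y, X y -> agree n x y -> U y.

Definition continuous_on (X : set Pt) (f : Pt -> Pt) : Prop :=
  forall U, is_open X U -> is_open X [set x | X x /\ U (f x)].

Definition is_homeo (X : set Pt) (f : Pt -> Pt) : Prop :=
  (forall x, X x -> X (f x)) /\
  exists f' : Pt -> Pt, (forall x, X x -> X (f' x)) /\
    (forall x, X x -> f' (f x) = x) /\ (forall x, X x -> f (f' x) = x) /\
    continuous_on X f /\ continuous_on X f'.

(* The standard ultrametric compatible with the topology:
   d(x,y) = 2^{-min{l | x_l <> y_l}}, d(x,x) = 0. *)
Definition dist (x y : Pt) : Rdefinitions.R :=
  sup [set ((2 : Rdefinitions.R) ^+ n)^-1 | n in [set n | x n <> y n]].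

Definition diam (U : set Pt) : Rdefinitions.R := sup [set dist x y | x in U & y in U].

(* Closure of Phi(Gamma) in Homeo(X) for the uniform (sup) metric *)
Definition closure_group (X : set Pt) : set (Pt -> Pt) :=
  [set h | is_homeo X h /\
     forall e : Rdefinitions.R, 0 < e -> exists g : Heis,
       sup [set dist (h x) (act g x) | x in X] < e].

Definition locally_quasi_analytic (X : set Pt) (G : set (Pt -> Pt)) : Prop :=
  exists e : Rdefinitions.R, 0 < e /\
    forall U V : set Pt, is_open X U -> U !=set0 -> diam U < e ->
      is_open X V -> V !=set0 -> V `<=` U ->
      forall g1 g2, G g1 -> G g2 ->
        (forall x, V x -> g1 x = g2 x) -> forall x, U x -> g1 x = g2 x.

Definition wild (X : set Pt) : Prop := ~ locally_quasi_analytic X (closure_group X).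

Definition topologically_free (X : set Pt) : Prop :=
  forall g : Heis, (exists x, X x /\ act g x <> x) ->
    ~ (exists U, is_open X U /\ U !=set0 /\ forall x, U x -> act g x = x).

(* Steinitz order lcm_l [Gamma : Gamma_l] = prod_p p^chi(p) *)
Definition in_prime_spectrum (Gam : nat -> set Heis) (p : nat) : Prop :=
  exists l n, has_index (Gam l) n /\ (0 < logn p n)%N.
Definition finite_multiplicity (Gam : nat -> set Heis) (p : nat) : Prop :=
  exists B, forall l n, has_index (Gam l) n -> (logn p n <= B)%N.

(* This gives
     (i) topological freeness when the chain has trivial intersection, and
     (ii) a criterion for wildness: an element of the closure that is the
     identity on a small cylinder but not on a slightly larger one.
   - Arithmetic of the chain Gamma_l: subgroup, index M_l^5, intersection 1,
     and the q-adic valuations of the index (prime spectrum, multiplicity 5).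
   - The wildness witness: with R_l the product of the q_i (i < l, i <> n)
     and t = phi(q_n), the integers a_l = q_n R_l^(2t) are congruent to q_n
     modulo q_n^2 and to 0 modulo q_i^2 (i <> n) by Euler's theorem, and the
     translations by (a_l, 0, 0) converge to a homeomorphism which fixes the
     cylinder of depth n+2 around the base point but moves (0, N_n, 0). *)
From HB Require Import structures.
From mathcomp Require Import all_boot all_order all_algebra.
From mathcomp Require Import all_classical all_reals.
From mathcomp Require Import Rstruct.
From mathcomp Require Import ring zify.
From mathcomp Require cyclic.
Set Implicit Arguments. Unset Strict Implicit. Unset Printing Implicit Defensive.
Import Order.TTheory GRing.Theory Num.Theory.
Local Open Scope classical_set_scope.

Section HeisenbergGroup.
Local Open Scope ring_scope.

Lemma hmulA x y z : hmul (hmul x y) z = hmul x (hmul y z).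
Proof.
case: x => [[a b] c]; case: y => [[a' b'] c']; case: z => [[a'' b''] c''].
by rewrite /hmul /=; congr (_, _, _); ring.
Qed.

Lemma hmul1l x : hmul hone x = x.
Proof. by case: x => [[a b] c]; rewrite /hmul /hone /=; congr (_, _, _); ring. Qed.

Lemma hmul1r x : hmul x hone = x.
Proof. by case: x => [[a b] c]; rewrite /hmul /hone /=; congr (_, _, _); ring. Qed.

Lemma hmulVl x : hmul (hinv x) x = hone.
Proof. by case: x => [[a b] c]; rewrite /hmul /hinv /hone /=; congr (_, _, _); ring. Qed.

Lemma hmulVr x : hmul x (hinv x) = hone.
Proof. by case: x => [[a b] c]; rewrite /hmul /hinv /hone /=; congr (_, _, _); ring. Qed.

Lemma hinvM x y : hinv (hmul x y) = hmul (hinv y) (hinv x).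
Proof.
case: x => [[a b] c]; case: y => [[a' b'] c'].
by rewrite /hmul /hinv /=; congr (_, _, _); ring.
Qed.

Lemma hinvK x : hinv (hinv x) = x.
Proof. by case: x => [[a b] c]; rewrite /hinv /=; congr (_, _, _); ring. Qed.

Lemma conj_x_axis a x y z :
  hmul (hinv (hmul (a, 0, 0) (x, y, z))) (x, y, z) = (- a, 0, - (a * y)).
Proof. by rewrite /hmul /hinv /=; congr (_, _, _); ring. Qed.

End HeisenbergGroup.

Lemma hinv1 : hinv hone = hone.
Proof. by rewrite -[hinv hone]hmul1r hmulVl. Qed.

Lemma act_lcoset H a k : [set hmul a h | h in lcoset H k] = lcoset H (hmul a k).
Proof.
apply/seteqP; split => x.
- by case=> _ [h Hh <-] <-; exists h => //; rewrite hmulA.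
- by case=> h Hh <-; exists (hmul k h); [exists h | rewrite hmulA].
Qed.

Lemma lcoset_sub H H' g : H `<=` H' -> lcoset H g `<=` lcoset H' g.
Proof. by move=> sHH' x [h Hh <-]; exists h => //; exact: sHH'. Qed.

Section Cosets.
Variable H : set Heis.
Hypothesis sH : is_subgroup H.

Lemma lcoset_self g : lcoset H g g.
Proof. by case: sH => H1 _; exists hone => //; exact: hmul1r. Qed.

Lemma lcoset_eqP g g' : lcoset H g = lcoset H g' <-> H (hmul (hinv g) g').
Proof.
case: sH => H1 [HM HV]; split => [E | Hd].
  by have := lcoset_self g'; rewrite -E => -[h Hh <-]; rewrite -hmulA hmulVl hmul1l.
apply/seteqP; split => x [h Hh <-].
- exists (hmul (hinv (hmul (hinv g) g')) h); first by apply: HM => //; exact: HV.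
  by rewrite hinvM hinvK -!hmulA hmulVr hmul1l.
- exists (hmul (hmul (hinv g) g') h); first exact: HM.
  by rewrite -!hmulA hmulVr hmul1l.
Qed.

Lemma lcoset_in g k : lcoset H g k -> lcoset H g = lcoset H k.
Proof. by case=> h Hh <-; apply/lcoset_eqP; rewrite -hmulA hmulVl hmul1l. Qed.

Lemma lcoset1 : lcoset H hone = H.
Proof.
apply/seteqP; split => x; first by case=> h Hh <-; rewrite hmul1l.
by move=> Hx; exists x => //; rewrite hmul1l.
Qed.

Lemma same_lcoset_sym g h : same_lcoset H g h -> same_lcoset H h g.
Proof. by case: sH => _ [_ HV] /HV; rewrite /same_lcoset hinvM hinvK. Qed.

Lemma same_lcoset_trans g h k :
  same_lcoset H g h -> same_lcoset H h k -> same_lcoset H g k.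
Proof.
case: sH => _ [HM _] Hgh Hhk; have := HM _ _ Hgh Hhk.
by rewrite /same_lcoset -hmulA (hmulA (hinv g)) hmulVr hmul1r.
Qed.

(* A system of distinct cosets injects into a complete system of cosets. *)
Lemma index_le n m : has_index H n -> has_index H m -> (n <= m)%N.
Proof.
move=> [r [r_inj _]] [r' [_ r'_onto]].
pose f i := projT1 (cid (r'_onto (r i))).
have fP i : same_lcoset H (r' (f i)) (r i) := projT2 (cid (r'_onto (r i))).
have f_inj : injective f.
  move=> i j fij; apply: r_inj; apply: same_lcoset_trans (same_lcoset_sym (fP i)) _.
  by rewrite fij; exact: fP.
by have := leq_card f f_inj; rewrite !card_ord.
Qed.

Lemma index_uniq n m : has_index H n -> has_index H m -> n = m.
Proof. by move=> hn hm; apply/eqP; rewrite eqn_leq !index_le. Qed.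

End Cosets.

Section Ultrametric.
Local Open Scope ring_scope.
Local Notation R := Rdefinitions.R.

Lemma sup_le_nonneg (E : set R) b : 0 <= b -> (forall y, E y -> y <= b) -> sup E <= b.
Proof.
move=> b_ge0 Eb; have [[y Ey] | E0] := pselect (E !=set0).
  by apply: ge_sup => //; exists y.
have -> : E = set0 by apply/seteqP; split => y // Ey; apply: E0; exists y.
by rewrite sup0.
Qed.

Lemma inv_pow2_ge0 n : 0 <= ((2 : R) ^+ n)^-1.
Proof. by rewrite invr_ge0 exprn_ge0. Qed.

Lemma dist_le (x y : Pt) L : agree L.+1 x y -> dist x y <= ((2 : R) ^+ L.+1)^-1.
Proof.
move=> xy; apply: sup_le_nonneg; first exact: inv_pow2_ge0.
move=> _ [n xy_n <-]; rewrite lef_pV2 ?posrE ?exprn_gt0 //.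
rewrite -!natrX ler_nat leq_exp2l // ltnNge; apply/negP => nL.
by apply: xy_n; apply: xy.
Qed.

Lemma inv_pow2_small (e : R) : 0 < e -> exists L, ((2 : R) ^+ L.+1)^-1 < e.
Proof.
move=> e_gt0; have einv_ge0 : 0 <= e^-1 by rewrite invr_ge0 ltW.
exists (Num.Def.archi_bound e^-1).
rewrite invf_plt ?posrE ?exprn_gt0 //; apply: lt_le_trans (archi_boundP einv_ge0) _.
by rewrite -natrX ler_nat ltnW // (ltn_trans (ltnSn _)) // ltn_expl.
Qed.

End Ultrametric.

Section InverseLimit.
Variable Gam : nat -> set Heis.
Hypothesis Gam_subgroup : forall l, is_subgroup (Gam l).
Hypothesis Gam_chain : forall l, Gam l.+1 `<=` Gam l.
Local Notation X := (Xinf Gam).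
Local Open Scope ring_scope.

Lemma chain_mono l l' : (l <= l')%N -> Gam l' `<=` Gam l.
Proof.
move=> /subnKC <-; elim: (l' - l)%N => [|k IH]; first by rewrite addn0.
by rewrite addnS; apply: subset_trans IH.
Qed.

Lemma X_coset x : X x -> forall l, exists k, x l = lcoset (Gam l) k.
Proof. by move=> Xx l; case: (Xx l). Qed.

Lemma X_chain x l l' : X x -> (l <= l')%N -> x l' `<=` x l.
Proof.
move=> Xx /subnKC <-; elim: (l' - l)%N => [|k IH]; first by rewrite addn0.
by rewrite addnS; apply: subset_trans IH; case: (Xx (l + k)%N).
Qed.

Lemma X_rep x l k : X x -> x l k -> x l = lcoset (Gam l) k.
Proof.
move=> Xx xlk; have [k' xlE] := X_coset Xx l; rewrite xlE in xlk *.
exact: lcoset_in xlk.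
Qed.

Definition pt (k : Heis) : Pt := fun l => lcoset (Gam l) k.

Lemma pt_in k : X (pt k).
Proof. by move=> l; split; [exists k | exact: lcoset_sub]. Qed.

Lemma act_pt g k : act g (pt k) = pt (hmul g k).
Proof. by apply: funext => l; rewrite /act /pt act_lcoset. Qed.

Lemma act1 x : act hone x = x.
Proof.
apply: funext => l; apply/seteqP; split => y; first by case=> h xh <-; rewrite hmul1l.
by move=> xy; exists y => //; rewrite hmul1l.
Qed.

Lemma pt_inj : (forall x, (forall l, Gam l x) -> x = hone) -> injective pt.
Proof.
move=> Gam_cap g k gk.
have gVk : hmul (hinv g) k = hone.
  by apply: Gam_cap => l; apply/(lcoset_eqP (Gam_subgroup l)); rewrite -/(pt g l) gk.
by rewrite -[k]hmul1l -(hmulVr g) hmulA gVk hmul1r.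
Qed.

Lemma open_meets_orbit U : is_open X U -> U !=set0 -> exists k, U (pt k).
Proof.
move=> [UX Uo] [x Ux]; have Xx := UX _ Ux; have [n Un] := Uo x Ux.
have [k xnE] := X_coset Xx n; exists k; apply: Un; first exact: pt_in.
move=> l ln; apply: X_rep => //; apply: (X_chain Xx (ltnW ln)).
by rewrite xnE; exact: lcoset_self.
Qed.

Lemma topologically_free_chain :
  (forall x, (forall l, Gam l x) -> x = hone) -> topologically_free X.
Proof.
move=> Gam_cap g [x [_ gx]] [U [Uo [U0 Ufix]]].
have [k Uk] := open_meets_orbit Uo U0.
have := Ufix _ Uk; rewrite act_pt => /(pt_inj Gam_cap) gkk.
apply: gx; suff -> : g = hone by rewrite act1.
by rewrite -[g]hmul1r -(hmulVr k) -hmulA gkk.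
Qed.

Definition cyl n (x : Pt) : set Pt := [set y | X y /\ agree n x y].

Lemma cyl_open n x : is_open X (cyl n x).
Proof.
split=> [y [] //|y [Xy xy]]; exists n => z Xz yz; split=> // l ln.
by rewrite (xy l ln) (yz l ln).
Qed.

Lemma cyl_diam n x : diam (cyl n.+1 x) <= ((2 : Rdefinitions.R) ^+ n.+1)^-1.
Proof.
apply: sup_le_nonneg; first exact: inv_pow2_ge0.
move=> _ [y [_ xy] [z [_ xz] <-]]; apply: dist_le => l ln.
by rewrite -(xy l ln) (xz l ln).
Qed.

Lemma cyl_sub n x : cyl n.+1 x `<=` cyl n x.
Proof. by move=> y [Xy xy]; split=> // l ln; apply: xy; exact: ltnW. Qed.

Lemma cyl_base_rep m x : cyl m.+1 (pt hone) x ->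
  forall l, exists2 k, x l = lcoset (Gam l) k & Gam m k.
Proof.
move=> [Xx x1] l; have [lm | ml] := leqP l m.
  by exists hone; [rewrite -(x1 l lm) | case: (Gam_subgroup m)].
have [k xlE] := X_coset Xx l; exists k => //.
have : x m k by apply: (X_chain Xx (ltnW ml)); rewrite xlE; exact: lcoset_self.
by rewrite -(x1 m (ltnSn m)) /pt lcoset1.
Qed.

(* Levelwise translation by a sequence (g_l): the l-th coordinate is moved by
   g_l.  Coherence of (g_l) means that g_L acts like g_m on level m, m <= L. *)
Definition translate (gs : nat -> Heis) (x : Pt) : Pt :=
  fun l => [set hmul (gs l) h | h in x l].

Definition coherent (gs : nat -> Heis) : Prop := forall m L k, (m <= L)%N ->
  Gam m (hmul (hinv (hmul (gs m) k)) (hmul (gs L) k)).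

Lemma translate_coset gs x l k :
  x l = lcoset (Gam l) k -> translate gs x l = lcoset (Gam l) (hmul (gs l) k).
Proof. by move=> xlE; rewrite /translate xlE act_lcoset. Qed.

Lemma translate_in gs x : coherent gs -> X x -> X (translate gs x).
Proof.
move=> gs_coh Xx l; split.
  by have [k xlE] := X_coset Xx l; exists (hmul (gs l) k); exact: translate_coset.
have [k xSE] := X_coset Xx l.+1.
have xlk : x l k.
  by apply: (X_chain Xx (leqnSn l)); rewrite xSE; exact: lcoset_self.
rewrite (translate_coset gs xSE) (translate_coset gs (X_rep Xx xlk)).
rewrite (proj2 (lcoset_eqP (Gam_subgroup l) _ _) (gs_coh l l.+1 k (leqnSn l))).
exact: lcoset_sub.
Qed.

Lemma translate_level gs x m L : coherent gs -> X x -> (m <= L)%N ->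
  translate gs x m = act (gs L) x m.
Proof.
move=> gs_coh Xx mL; have [k xmE] := X_coset Xx m.
change (translate gs x m = translate (fun=> gs L) x m).
rewrite (translate_coset gs xmE) (translate_coset (fun=> gs L) xmE).
exact/(lcoset_eqP (Gam_subgroup m))/gs_coh.
Qed.

Lemma translateK gs : cancel (translate gs) (translate (fun l => hinv (gs l))).
Proof.
move=> x; apply: funext => l; apply/seteqP; split => y.
  by case=> _ [h xh <-] <-; rewrite -hmulA hmulVl hmul1l.
by move=> xy; exists (hmul (gs l) y); [exists y | rewrite -hmulA hmulVl hmul1l].
Qed.

Lemma translate_cont gs : coherent gs -> continuous_on X (translate gs).
Proof.
move=> gs_coh U [UX Uo]; split=> [x [] //|x [Xx Ux]].
have [n Un] := Uo _ Ux; exists n => y Xy xy; split=> //.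
by apply: Un; [exact: translate_in | move=> l ln; rewrite /translate (xy l ln)].
Qed.

(* A coherent sequence with coherent inverses defines an element of the
   closure of the action: it is uniformly approximated by act (gs L). *)
Lemma translate_closure gs : coherent gs -> coherent (fun l => hinv (gs l)) ->
  closure_group X (translate gs).
Proof.
move=> gs_coh gsV_coh; split.
  split=> [x|]; first exact: translate_in.
  exists (translate (fun l => hinv (gs l))); split=> [x|]; first exact: translate_in.
  split=> [x _|]; first exact: translateK.
  split=> [x _|]; last by split; apply: translate_cont.
  have := translateK (fun l => hinv (gs l)) x.
  by have -> : (fun l => hinv (hinv (gs l))) = gs by apply: funext => l; rewrite hinvK.
move=> e e_gt0; have [L Le] := inv_pow2_small e_gt0; exists (gs L).
apply: le_lt_trans Le; apply: sup_le_nonneg; first exact: inv_pow2_ge0.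
move=> _ [x Xx <-]; apply: dist_le => m mL; exact: translate_level.
Qed.

Lemma coherent_const g : coherent (fun=> g).
Proof. by move=> m L k _; rewrite hmulVl; case: (Gam_subgroup m). Qed.

Lemma act_closure g : closure_group X (act g).
Proof. exact: translate_closure (coherent_const g) (coherent_const (hinv g)). Qed.

(* Wildness criterion: at every depth n some element of the closure fixes the
   cylinder of depth n+2 around the base point, but not that of depth n+1.
   Comparing it with the identity defeats every candidate scale e. *)
Lemma wild_criterion :
  (forall n, exists2 h, closure_group X h &
     (forall x, cyl n.+2 (pt hone) x -> h x = x) /\
     exists2 x, cyl n.+1 (pt hone) x & h x <> x) -> wild X.
Proof.
move=> witness [e [e_gt0 lqa]].
have [n ne] := inv_pow2_small e_gt0.
have [h h_cl [h_fix [x x_cyl hx]]] := witness n.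
have base_cyl m : cyl m (pt hone) (pt hone) by split; [exact: pt_in |].
have small_U : diam (cyl n.+1 (pt hone)) < e by exact: le_lt_trans (cyl_diam n _) ne.
have h_id y : cyl n.+2 (pt hone) y -> h y = act hone y by move/h_fix ->; rewrite act1.
apply: hx; rewrite -[RHS]act1.
exact: (lqa _ _ (cyl_open _ _) (ex_intro _ _ (base_cyl _)) small_U (cyl_open _ _)
  (ex_intro _ _ (base_cyl _)) (@cyl_sub _ _) _ _ h_cl (act_closure hone) h_id x x_cyl).
Qed.

End InverseLimit.

Lemma has_index_card (H : set Heis) (T : finType) (r : T -> Heis) :
  (forall s t, same_lcoset H (r s) (r t) -> s = t) ->
  (forall h, exists t, same_lcoset H (r t) h) -> has_index H #|T|.
Proof.
move=> r_inj r_onto; exists (fun i => r (enum_val i)); split.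
  by move=> i j /r_inj /enum_val_inj.
by move=> h; have [t rt] := r_onto h; exists (enum_rank t); rewrite enum_rankK.
Qed.

Section Residues.
Local Open Scope ring_scope.

Lemma residue_inj m (i j : 'I_m) : (m%:Z %| j%:Z - i%:Z)%Z -> i = j.
Proof.
rewrite dvdzE /= => m_dvd; apply: val_inj => /=.
have : `|j%:Z - i%:Z|%N == 0%N.
  apply/negPn/negP => nz; have := dvdn_leq _ m_dvd; rewrite lt0n nz => /(_ isT).
  by have := ltn_ord i; have := ltn_ord j; lia.
lia.
Qed.

Lemma residue_exists m (a : int) : (0 < m)%N ->
  exists i : 'I_m, (m%:Z %| a - i%:Z)%Z.
Proof.
move=> m_gt0; have mz : m%:Z != 0 by rewrite eqz_nat -lt0n.
have modE : `|(a %% m%:Z)%Z|%N%:Z = (a %% m%:Z)%Z by rewrite gez0_abs // modz_ge0.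
have lt_m : (`|(a %% m%:Z)%Z| < m)%N by rewrite -ltz_nat modE; exact: ltz_mod.
exists (Ordinal lt_m); apply/dvdzP; exists (a %/ m%:Z)%Z => /=.
by rewrite modE {1}(divz_eq a m%:Z) addrK.
Qed.

End Residues.

Section HeisenbergChain.
Variable q : nat -> nat.
Hypothesis q_prime : forall i, prime (q i).
Local Open Scope ring_scope.

Definition Mn l := (\prod_(i < l) q i)%N.

Lemma MnS l : Mn l.+1 = (Mn l * q l)%N.
Proof. by rewrite /Mn big_ord_recr. Qed.

Lemma Mn_gt0 l : (0 < Mn l)%N.
Proof.
elim: l => [|l IH]; first by rewrite /Mn big_ord0.
by rewrite MnS muln_gt0 IH prime_gt0.
Qed.

Lemma Mn_ge l : (2 ^ l <= Mn l)%N.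
Proof.
elim: l => [|l IH]; first by rewrite /Mn big_ord0.
by rewrite MnS expnSr leq_mul // prime_gt1.
Qed.

Lemma MqE l : Mq q l = (Mn l)%:Z. Proof. by []. Qed.

Lemma NqE l : Nq q l = (Mn l ^ 2)%N%:Z.
Proof.
rewrite /Nq /Mn -mulnn -big_split /=.
by congr Posz; apply: eq_bigr => i _; rewrite mulnn.
Qed.

Lemma Mq_dvd_Nq l : (Mq q l %| Nq q l)%Z.
Proof. by rewrite MqE NqE dvdzE /= dvdn_exp. Qed.

Lemma GammaP l a b c : Gamma q l (a, b, c) <->
  [/\ (Mq q l %| a)%Z, (Nq q l %| b)%Z & (Nq q l %| c)%Z].
Proof.
split; first by case=> a' [b' [c' [-> -> ->]]]; split; apply: dvdz_mull.
by case=> /dvdzP[a' ->] /dvdzP[b' ->] /dvdzP[c' ->]; exists a', b', c'.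
Qed.

Lemma Gamma_subgroup l : is_subgroup (Gamma q l).
Proof.
split; first by apply/GammaP; rewrite !dvdz0.
split=> [[[a b] c] [[a' b'] c'] | [[a b] c]].
  move=> /GammaP[ha hb hc] /GammaP[ha' hb' hc'].
  by apply/GammaP; split; rewrite ?rpredD // dvdz_mull.
move=> /GammaP[ha hb hc]; apply/GammaP.
by split; rewrite ?rpredN // rpredD ?rpredN // dvdz_mull.
Qed.

Lemma Gamma_chain l : Gamma q l.+1 `<=` Gamma q l.
Proof.
have hM : (Mq q l %| Mq q l.+1)%Z by rewrite !MqE MnS dvdzE /= dvdn_mulr.
have hN : (Nq q l %| Nq q l.+1)%Z by rewrite !NqE MnS dvdzE /= expnMn dvdn_mulr.
move=> [[a b] c] /GammaP[ha hb hc]; apply/GammaP.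
by split; [exact: dvdz_trans ha | exact: dvdz_trans hb | exact: dvdz_trans hc].
Qed.

(* The only integer divisible by every M_l is 0, since 2^l <= M_l. *)
Lemma Mq_dvd_all (z : int) : (forall l, (Mq q l %| z)%Z) -> z = 0.
Proof.
move=> z_dvd; apply/eqP/negPn/negP => z_neq0.
have := z_dvd `|z|%N; rewrite MqE dvdzE /= => /dvdn_leq.
rewrite absz_gt0 z_neq0 => /(_ isT) /(leq_trans (Mn_ge _)).
by rewrite leqNgt ltn_expl.
Qed.

Lemma Gamma_cap x : (forall l, Gamma q l x) -> x = hone.
Proof.
case: x => [[a b] c] Gx.
have [ha hb hc] : [/\ forall l, (Mq q l %| a)%Z, forall l, (Mq q l %| b)%Z
   & forall l, (Mq q l %| c)%Z].
  by split=> l; have /GammaP[? ? ?] := Gx l; rewrite // (dvdz_trans (Mq_dvd_Nq l)).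
by rewrite /hone (Mq_dvd_all ha) (Mq_dvd_all hb) (Mq_dvd_all hc).
Qed.

Lemma coset_congr l a b c a' b' c' :
  Gamma q l (hmul (hinv (a, b, c)) (a', b', c')) <->
  [/\ (Mq q l %| a' - a)%Z, (Nq q l %| b' - b)%Z & (Nq q l %| c' - c)%Z].
Proof.
have -> : hmul (hinv (a, b, c)) (a', b', c') =
  (a' - a, b' - b, (c' - c) - a * (b' - b)).
  by rewrite /hmul /hinv /=; congr (_, _, _); ring.
rewrite GammaP; split=> -[ha hb hc]; split=> //.
  by rewrite -(subrK (a * (b' - b)) (c' - c)) rpredD // dvdz_mull.
by rewrite rpredB // dvdz_mull.
Qed.

Lemma Gamma_index l : has_index (Gamma q l) (Mn l ^ 5).
Proof.
set m := Mn l; have m_gt0 : (0 < m)%N := Mn_gt0 l.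
have mm_gt0 : (0 < m ^ 2)%N by rewrite expn_gt0 m_gt0.
pose r (t : 'I_m * 'I_(m ^ 2) * 'I_(m ^ 2)) : Heis := (t.1.1%:Z, t.1.2%:Z, t.2%:Z).
have -> : (m ^ 5 = #|{: 'I_m * 'I_(m ^ 2) * 'I_(m ^ 2)}|)%N.
  by rewrite !card_prod !card_ord -expnS -expnD.
apply: (@has_index_card _ _ r).
  move=> [[i j] k] [[i' j'] k']; rewrite /r /= => /coset_congr[].
  rewrite MqE NqE => /residue_inj -> /residue_inj -> /residue_inj -> //.
move=> [[a b] c].
have [i hi] := residue_exists a m_gt0.
have [j hj] := residue_exists b mm_gt0.
have [k hk] := residue_exists c mm_gt0.
by exists (i, j, k); apply/coset_congr; rewrite MqE NqE.
Qed.

Lemma logn_Mn p l : logn p (Mn l) = (\sum_(i < l) (p == q i))%N.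
Proof.
elim: l => [|l IH]; first by rewrite /Mn !big_ord0 logn1.
by rewrite MnS big_ord_recr /= lognM ?Mn_gt0 ?prime_gt0 // IH logn_prime.
Qed.

Lemma logn_index p l n : has_index (Gamma q l) n ->
  logn p n = (5 * \sum_(i < l) (p == q i))%N.
Proof.
move=> nl; rewrite (index_uniq (Gamma_subgroup l) nl (Gamma_index l)).
by rewrite lognX logn_Mn.
Qed.

Lemma sum_eq_q i l : injective q -> (\sum_(j < l) (q i == q j))%N = (i < l)%N :> nat.
Proof.
move=> q_inj; elim: l => [|l IH]; first by rewrite big_ord0.
rewrite big_ord_recr /= IH (inj_eq q_inj) ltnS.
by case: (eqVneq i l) => [->|ne]; [rewrite ltnn leqnn | rewrite addn0 ltn_neqAle ne].
Qed.

End HeisenbergChain.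
Arguments Gamma_chain {q} l {t}.

Section XAxis.
Variable q : nat -> nat.
Local Open Scope ring_scope.

Lemma x_axis_fix l a x y z :
  lcoset (Gamma q l) (hmul (a, 0, 0) (x, y, z)) = lcoset (Gamma q l) (x, y, z) <->
  (Mq q l %| a)%Z /\ (Nq q l %| a * y)%Z.
Proof.
rewrite (lcoset_eqP (Gamma_subgroup q l)) conj_x_axis; split.
  by move=> /GammaP[ha _ hay]; move: ha hay; rewrite !rpredN.
by move=> [ha hay]; apply/GammaP; rewrite !rpredN dvdz0.
Qed.

Lemma x_axis_coherent (a : nat -> int) :
  (forall m L, (m <= L)%N -> (Nq q m %| a L - a m)%Z) ->
  coherent (Gamma q) (fun l => (a l, 0, 0)).
Proof.
move=> a_cauchy m L [[x y] z] mL.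
have -> : hmul (hinv (hmul (a m, 0, 0) (x, y, z))) (hmul (a L, 0, 0) (x, y, z)) =
          (a L - a m, 0, (a L - a m) * y).
  by rewrite /hmul /hinv /=; congr (_, _, _); ring.
apply/GammaP; split; rewrite ?dvdz0 ?dvdz_mulr ?a_cauchy //.
exact: dvdz_trans (Mq_dvd_Nq q m) (a_cauchy _ _ mL).
Qed.

End XAxis.

(* The wildness witness at depth n.  Write M_l = R_l e_l where e_l = q_n if
   n < l and 1 otherwise, and put a_l = q_n R_l^(2t) with t = phi(q_n). *)
Section WildWitness.
Variable q : nat -> nat.
Hypothesis q_prime : forall i, prime (q i).
Hypothesis q_inj : injective q.
Variable n : nat.
Local Notation t := (totient (q n)).

Definition Rskip l := (\prod_(i < l) (if (i : nat) != n then q i else 1))%N.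
Definition qpart l := if (n < l)%N then q n else 1%N.
Definition wild_seq l : int := (q n * (Rskip l ^ t) ^ 2)%N%:Z.

Lemma totient_qn_gt0 : (0 < t)%N.
Proof. by rewrite totient_gt0 prime_gt0. Qed.

Lemma RskipS l : Rskip l.+1 = (Rskip l * (if l != n then q l else 1))%N.
Proof. by rewrite /Rskip big_ord_recr. Qed.

Lemma Rskip_gt0 l : (0 < Rskip l)%N.
Proof.
elim: l => [|l IH]; first by rewrite /Rskip big_ord0.
by rewrite RskipS muln_gt0 IH; case: ifP => // _; exact: prime_gt0.
Qed.

Lemma Mn_split l : Mn q l = (Rskip l * qpart l)%N.
Proof.
elim: l => [|l IH]; first by rewrite /Mn /Rskip /qpart !big_ord0.
rewrite MnS IH RskipS /qpart; case: (eqVneq l n) => [->|ne].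
  by rewrite ltnn ltnSn /= muln1.
have -> : (n < l.+1)%N = (n < l)%N by rewrite ltnS leq_eqVlt eq_sym (negbTE ne).
by rewrite /= mulnAC.
Qed.

Lemma Rskip_coprime l : coprime (Rskip l) (q n).
Proof.
elim: l => [|l IH]; first by rewrite /Rskip big_ord0 coprime1n.
rewrite RskipS coprimeMl IH /=; case: (eqVneq l n) => [_|ne] /=; first exact: coprime1n.
by rewrite prime_coprime // dvdn_prime2 // (inj_eq q_inj).
Qed.

Lemma Rskip_dvd m L : (m <= L)%N -> (Rskip m %| Rskip L)%N.
Proof.
move=> /subnKC <-; elim: (L - m)%N => [|k IH]; first by rewrite addn0.
by rewrite addnS RskipS dvdn_mulr.
Qed.

Lemma qpart_dvd l : (qpart l %| q n)%N.
Proof. by rewrite /qpart; case: ifP. Qed.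

Local Open Scope ring_scope.

Lemma Mq_dvd_wild_seq l : (Mq q l %| wild_seq l)%Z.
Proof.
rewrite MqE dvdzE /= Mn_split mulnC dvdn_mul ?qpart_dvd //.
by rewrite -expnM -{1}(expn1 (Rskip l)) dvdn_exp2l // muln_gt0 totient_qn_gt0.
Qed.

Lemma Nq_dvd_wild_seq l (y : int) : ((q n)%:Z %| y)%Z -> (Nq q l %| wild_seq l * y)%Z.
Proof.
move=> /dvdzP [y' ->]; rewrite NqE /wild_seq.
have -> : (q n * (Rskip l ^ t) ^ 2)%N%:Z * (y' * (q n)%:Z) =
          y' * ((Rskip l ^ t) ^ 2 * q n ^ 2)%N%:Z by rewrite !PoszM; ring.
rewrite dvdz_mull // dvdzE /= Mn_split expnMn dvdn_mul ?dvdn_exp2r ?qpart_dvd //.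
by rewrite -{1}(expn1 (Rskip l)) dvdn_exp2l // totient_qn_gt0.
Qed.

(* ... while the a_l form a Cauchy sequence: a_L = a_m modulo N_m, because
   (R_L / R_m)^t = 1 modulo q_n by Euler's theorem. *)
Lemma wild_seq_cauchy m L : (m <= L)%N -> (Nq q m %| wild_seq L - wild_seq m)%Z.
Proof.
move=> mL; set S := (Rskip L %/ Rskip m)%N.
have RL : Rskip L = (S * Rskip m)%N by rewrite divnK // Rskip_dvd.
have S_gt0 : (0 < S)%N by have := Rskip_gt0 L; rewrite RL muln_gt0 => /andP[].
have S_coprime : coprime S (q n).
  by apply: coprime_dvdl (Rskip_coprime L); rewrite RL dvdn_mulr.
have /dvdnP [w hw] : (q n %| S ^ t - 1)%N.
  by rewrite -eqn_mod_dvd ?expn_gt0 ?S_gt0 //; apply/eqP; exact: cyclic.Euler_exp_totient.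
have St : (S ^ t = w * q n + 1)%N by rewrite -hw subnK // expn_gt0 S_gt0.
rewrite /wild_seq; set Y := (Rskip m ^ t)%N.
have -> : (q n * (Rskip L ^ t) ^ 2 =
           q n * Y ^ 2 + q n ^ 2 * Y ^ 2 * (w ^ 2 * q n + 2 * w))%N.
  by rewrite RL expnMn St /Y; ring.
rewrite PoszD addrAC subrr add0r NqE dvdzE /= Mn_split.
apply: dvdn_mulr; rewrite expnMn mulnC dvdn_mul ?dvdn_exp2r ?qpart_dvd //.
by rewrite /Y -{1}(expn1 (Rskip m)) dvdn_exp2l // totient_qn_gt0.
Qed.

(* Finally a_(n+1) N_n is not divisible by N_(n+1), as q_n^2 does not divide
   a_(n+1) = q_n R_n^(2t). *)
Lemma wild_seq_moves : ~ (Nq q n.+1 %| wild_seq n.+1 * Nq q n)%Z.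
Proof.
rewrite !NqE /wild_seq -PoszM dvdzE /= MnS RskipS eqxx muln1.
have -> : Mn q n = Rskip n by rewrite Mn_split /qpart ltnn muln1.
have qn_gt0 : (0 < q n)%N := prime_gt0 (q_prime n).
have R_gt0 : (0 < Rskip n)%N := Rskip_gt0 n.
have -> : ((Rskip n * q n) ^ 2 = (q n * Rskip n ^ 2) * q n)%N by ring.
have -> : (q n * (Rskip n ^ t) ^ 2 * Rskip n ^ 2 =
           (q n * Rskip n ^ 2) * (Rskip n ^ t) ^ 2)%N by ring.
rewrite dvdn_pmul2l ?muln_gt0 ?qn_gt0 ?expn_gt0 ?R_gt0 //.
rewrite !(Euclid_dvdX _ _ (q_prime n)) => /andP[/andP[qn_dvd _] _].
by move: (Rskip_coprime n); rewrite coprime_sym prime_coprime // qn_dvd.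
Qed.

Definition wild_h : Pt -> Pt := translate (fun l => (wild_seq l, 0, 0)).

Lemma wild_h_closure : closure_group (Xinf (Gamma q)) wild_h.
Proof.
apply: translate_closure; [exact: Gamma_subgroup | exact: Gamma_chain | |].
  exact: x_axis_coherent wild_seq_cauchy.
have -> : (fun l => hinv (wild_seq l, 0, 0)) = (fun l => (- wild_seq l, 0, 0)).
  by apply: funext => l; rewrite /hinv; congr (_, _, _); ring.
apply: x_axis_coherent => m L mL.
by rewrite opprK addrC -opprB rpredN wild_seq_cauchy.
Qed.

(* Near the base point every coordinate has a representative (x, y, z) in
   Gamma_(n+1), so q_n | y and (a_l, 0, 0) fixes it. *)
Lemma wild_h_fixes x : cyl (Gamma q) n.+2 (pt (Gamma q) hone) x -> wild_h x = x.
Proof.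
move=> x_cyl; apply: funext => l.
have [[[a b] c] xlE /GammaP[_ hb _]] := cyl_base_rep (@Gamma_subgroup q) x_cyl l.
rewrite /wild_h (translate_coset _ xlE) xlE; apply/x_axis_fix.
split; first exact: Mq_dvd_wild_seq.
apply/Nq_dvd_wild_seq/(dvdz_trans _ hb).
by rewrite NqE MnS dvdzE /= expnMn dvdn_mull // dvdn_exp.
Qed.

Lemma wild_h_moves : exists2 x, cyl (Gamma q) n.+1 (pt (Gamma q) hone) x & wild_h x <> x.
Proof.
exists (pt (Gamma q) ((0 : int), Nq q n, (0 : int))).
  split=> [|l ln]; first exact: (pt_in (@Gamma_chain q) _).
  apply/(lcoset_eqP (Gamma_subgroup q l)); rewrite hinv1 hmul1l.
  apply: (chain_mono (@Gamma_chain q) (ln : (l <= n)%N)); apply/GammaP.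
  by rewrite dvdz0 dvdzz.
move=> /(congr1 (fun x => x n.+1)).
rewrite /wild_h (translate_coset _ (erefl (pt (Gamma q) (0, Nq q n, 0) n.+1))).
by move=> /x_axis_fix[_ /wild_seq_moves].
Qed.

End WildWitness.

Section MainProperties.
Variable q : nat -> nat.
Hypothesis q_prime : forall i, prime (q i).
Hypothesis q_inj : injective q.

Lemma Gamma_wild : wild (Xinf (Gamma q)).
Proof.
apply: wild_criterion (@Gamma_subgroup q) (@Gamma_chain q) _ => n.
exists (wild_h q n); first exact: wild_h_closure.
by split; [exact: wild_h_fixes | exact: wild_h_moves].
Qed.

Lemma Gamma_prime_spectrum p : in_prime_spectrum (Gamma q) p <-> exists i, p = q i.
Proof.
split=> [[l [m [lm p_dvd]]] | [i ->]].
  rewrite (logn_index q_prime _ lm) in p_dvd.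
  have [[i /eqP ->] | no_i] := pselect (exists i : 'I_l, p == q i); first by exists i.
  move: p_dvd; rewrite big1 // => i _; case: eqP => // p_qi.
  by case: no_i; exists i; apply/eqP.
exists i.+1, (Mn q i.+1 ^ 5)%N; split; first exact: Gamma_index.
by rewrite (logn_index q_prime _ (Gamma_index q_prime _)) sum_eq_q // ltnSn.
Qed.

Lemma Gamma_finite_multiplicity i : finite_multiplicity (Gamma q) (q i).
Proof.
exists 5%N => l m lm.
by rewrite (logn_index q_prime _ lm) sum_eq_q //; case: ltnP.
Qed.

End MainProperties.

Unset Implicit Arguments.
Theorem mainTheorem9 (q : nat -> nat) (q_prime : forall i, prime (q i))
    (q_inj : injective q) :
  (forall l, is_subgroup (Gamma q l) /\ finite_index (Gamma q l) /\
             Gamma q l.+1 `<=` Gamma q l) /\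
  topologically_free (Xinf (Gamma q)) /\
  wild (Xinf (Gamma q)) /\
  (forall p, in_prime_spectrum (Gamma q) p <-> exists i, p = q i) /\
  (forall i, finite_multiplicity (Gamma q) (q i)).
Proof.
split.
  move=> l; split; first exact: Gamma_subgroup.
  split; last exact: Gamma_chain.
  by exists (Mn q l ^ 5)%N; exact: Gamma_index.
split; first exact: topologically_free_chain (@Gamma_subgroup q) (@Gamma_chain q) (Gamma_cap q_prime).
split; first exact: Gamma_wild.
split; first exact: Gamma_prime_spectrum.
exact: Gamma_finite_multiplicity.
Qed.
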